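(* For every $n\ge 2$, the CNF formula $MAP_n^{2n-3}$ has a DPLL refutation of size $2\lceil \log_2 n\rceil+1$.
   Context: MAP planning domain. Fix $n\ge 2$. The map is an undirected graph with $3n-3$ nodes: a centre $L^0$; a path (branch 1) $L^0 - L_1^1 - \dots - L_1^{2n-3}$; and, for each $i=2,\dots,n$, a single node $L_i^1$ adjacent to $L^0$. Facts are $at\text{-}x$ and $visited\text{-}x$. For every edge $\{x,y\}$ and both orientations there is an action $move\text{-}x\text{-}y$ with precondition $\{at\text{-}x\}$, add effects $\{at\text{-}y, visited\text{-}y\}$, delete effect $\{at\text{-}x\}$. The initial state is $\{at\text{-}L^0\}$. The goal of $MAP_n^{2n-3}$ is $\{visited\text{-}L_1^{2n-3}, visited\text{-}L_2^1\}$. The CNF formula $MAP_n^{2n-3}$ is the standard Graphplan-based (Blackbox-style) SAT encoding of this task with $T=2n-2$ time steps (unsatisfiable, since a shortest plan has $2n-1$ steps). Build the Graphplan planning graph from the initial state, with a NOOP action $NOOP\text{-}p$ (precondition and add effect $\{p\}$) for each fact $p$. For each $t=1,\dots,T$ there is a variable $a(t)$ for every action $a$ (including NOOPs) in action layer $t$. Clauses: goal clauses $\{a(T): g\in add(a)\}$ for each goal $g$; precondition clauses $\{\neg a(t)\}\cup\{a'(t-1): p\in add(a')\}$ for each $a(t)$, $t\ge 2$, $p\in pre(a)$; mutex clauses $\{\neg a(t),\neg a'(t)\}$ for pairs of actions Graphplan marks mutually exclusive at layer $t$ (interference or competing needs); in particular any two move actions at the same step are mutually exclusive. A DPLL refutation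 is a search tree of the Davis–Putnam–Logemann–Loveland procedure (branching on variables, applying unit propagation at each node) in which every leaf yields the empty clause; its size is its number of search nodes. *)

From Stdlib Require Import List Arith Lia.
Import ListNotations.

Inductive lit (V : Type) : Type :=
| Pos : V -> lit V
| Neg : V -> lit V.
Arguments Pos {V} _.
Arguments Neg {V} _.

Definition lneg {V : Type} (l : lit V) : lit V :=
  match l with Pos v => Neg v | Neg v => Pos v end.

Definition clause (V : Type) := lit V -> Prop.
Definition cnf (V : Type) := clause V -> Prop.

Inductive up_implied {V : Type} (F : cnf V) (rho : list (lit V)) : lit V -> Prop :=
| up_dec : forall l, In l rho -> up_implied F rho l
| up_unit : forall (C : clause V) l,
    F C -> C l ->
    (forall l', C l' -> l' <> l -> up_implied F rho (lneg l')) ->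
    up_implied F rho l.

Definition up_conflict {V : Type} (F : cnf V) (rho : list (lit V)) : Prop :=
  (exists C, F C /\ forall l, C l -> up_implied F rho (lneg l))
  \/ (exists l, up_implied F rho l /\ up_implied F rho (lneg l)).

Inductive dpll_tree (V : Type) : Type :=
| DLeaf : dpll_tree V
| DBranch : V -> dpll_tree V -> dpll_tree V -> dpll_tree V.
Arguments DLeaf {V}.
Arguments DBranch {V} _ _ _.

Fixpoint tree_size {V : Type} (t : dpll_tree V) : nat :=
  match t with
  | DLeaf => 1
  | DBranch _ t1 t2 => 1 + tree_size t1 + tree_size t2
  end.

Fixpoint dpll_refutes {V : Type} (F : cnf V) (isvar : V -> Prop)
  (rho : list (lit V)) (t : dpll_tree V) : Prop :=
  match t with
  | DLeaf => up_conflict F rho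
  | DBranch v t1 t2 =>
      ~ up_conflict F rho /\ isvar v /\
      ~ up_implied F rho (Pos v) /\ ~ up_implied F rho (Neg v) /\
      dpll_refutes F isvar (Pos v :: rho) t1 /\
      dpll_refutes F isvar (Neg v :: rho) t2
  end.

Definition dpll_refutation {V : Type} (F : cnf V) (isvar : V -> Prop)
  (t : dpll_tree V) : Prop := dpll_refutes F isvar [] t.

Record task := {
  Fact : Type;
  Act : Type;
  is_act : Act -> Prop;
  pre : Act -> Fact -> Prop;
  add : Act -> Fact -> Prop;
  del : Act -> Fact -> Prop;
  init : Fact -> Prop;
  goal : Fact -> Prop }.

Inductive gact (P : task) : Type :=
| Real : Act P -> gact P
| Noop : Fact P -> gact P.
Arguments Real {P} _.
Arguments Noop {P} _.

Section Graphplan.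
Variable P : task.

Definition gis_act (a : gact P) : Prop :=
  match a with Real a => is_act P a | Noop _ => True end.
Definition gpre (a : gact P) (p : Fact P) : Prop :=
  match a with Real a => pre P a p | Noop q => p = q end.
Definition gadd (a : gact P) (p : Fact P) : Prop :=
  match a with Real a => add P a p | Noop q => p = q end.
Definition gdel (a : gact P) (p : Fact P) : Prop :=
  match a with Real a => del P a p | Noop _ => False end.

(* A fact layer: the facts present and the fact-mutex relation. *)
Definition flayer := ((Fact P -> Prop) * (Fact P -> Fact P -> Prop))%type.

Definition act_in (FL : flayer) (a : gact P) : Prop :=
  gis_act a /\ (forall p, gpre a p -> fst FL p) /\
  (forall p q, gpre a p -> gpre a q -> ~ snd FL p q).

Definition interfere (a b : gact P) : Prop :=
  (exists p, gdel a p /\ (gpre b p \/ gadd b p)) \/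
  (exists p, gdel b p /\ (gpre a p \/ gadd a p)).

Definition act_mutex (FL : flayer) (a b : gact P) : Prop :=
  act_in FL a /\ act_in FL b /\ a <> b /\
  (interfere a b \/
   exists p q, gpre a p /\ gpre b q /\ snd FL p q).

Definition next_flayer (FL : flayer) : flayer :=
  (fun p => exists a, act_in FL a /\ gadd a p,
   fun p q => p <> q /\
     (exists a, act_in FL a /\ gadd a p) /\
     (exists b, act_in FL b /\ gadd b q) /\
     (forall a b, act_in FL a -> act_in FL b -> gadd a p -> gadd b q ->
                  act_mutex FL a b)).

Fixpoint fact_layer (t : nat) : flayer :=
  match t with
  | 0 => (init P, fun _ _ => False)
  | S t' => next_flayer (fact_layer t')
  end.

(* Action layer t >= 1 and its mutex relation. *)
Definition act_at (t : nat) (a : gact P) : Prop := act_in (fact_layer (t - 1)) a.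
Definition mutex_at (t : nat) (a b : gact P) : Prop :=
  act_mutex (fact_layer (t - 1)) a b.

Definition gvar := (gact P * nat)%type.
Definition is_gvar (T : nat) (v : gvar) : Prop :=
  1 <= snd v <= T /\ act_at (snd v) (fst v).

Definition same_clause (C D : clause gvar) : Prop := forall l, C l <-> D l.

Definition graphplan_cnf (T : nat) : cnf gvar := fun C =>
  (exists g, goal P g /\
     same_clause C (fun l => exists a, l = Pos (a, T) /\ act_at T a /\ gadd a g))
  \/
  (exists t a p, 2 <= t <= T /\ act_at t a /\ gpre a p /\
     same_clause C (fun l => l = Neg (a, t) \/
        exists a', l = Pos (a', t - 1) /\ act_at (t - 1) a' /\ gadd a' p))
  \/
  (exists t a b, 1 <= t <= T /\ mutex_at t a b /\
     same_clause C (fun l => l = Neg (a, t) \/ l = Neg (b, t))).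

End Graphplan.

(* L0 = centre; L1 k = L_1^k (branch 1, 1 <= k <= 2n-3);
   Lb i = L_i^1 (2 <= i <= n). *)
Inductive node : Type :=
| L0 : node
| L1 : nat -> node
| Lb : nat -> node.

(* Directed adjacency (both orientations of every undirected edge). *)
Definition map_edge (n : nat) (x y : node) : Prop :=
  (x = L0 /\ y = L1 1) \/ (x = L1 1 /\ y = L0) \/
  (exists k, 1 <= k < 2 * n - 3 /\
     ((x = L1 k /\ y = L1 (k + 1)) \/ (x = L1 (k + 1) /\ y = L1 k))) \/
  (exists i, 2 <= i <= n /\ ((x = L0 /\ y = Lb i) \/ (x = Lb i /\ y = L0))).

Inductive map_fact : Type :=
| At : node -> map_fact
| Visited : node -> map_fact.

(* Action move-x-y is the pair (x, y). *)
Definition MAP_task (n : nat) : task := {|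
  Fact := map_fact;
  Act := (node * node)%type;
  is_act := fun a => map_edge n (fst a) (snd a);
  pre := fun a p => p = At (fst a);
  add := fun a p => p = At (snd a) \/ p = Visited (snd a);
  del := fun a p => p = At (fst a);
  init := fun p => p = At L0;
  goal := fun p => p = Visited (L1 (2 * n - 3)) \/ p = Visited (Lb 2) |}.

(* The CNF formula MAP_n^{2n-3}: T = 2n-2 time steps. *)
Definition MAP_horizon (n : nat) : nat := 2 * n - 2.
Definition MAP_cnf (n : nat) : cnf (gvar (MAP_task n)) :=
  graphplan_cnf (MAP_task n) (MAP_horizon n).
Definition MAP_isvar (n : nat) : gvar (MAP_task n) -> Prop :=
  is_gvar (MAP_task n) (MAP_horizon n).

(* Branch on the moves move-L0-L_i^1 at the last step T = 2n-2.
   Setting one of them true refutes the goal visited-L_1^{2n-3}: that move is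
   mutex with the final move of branch 1 at T, so the goal forces that final
   move at T-1, which is mutex with every way of being at L0 at T-1.
   Setting move-L0-L_2^1 false forces, through the goal visited-L_2^1, its NOOP
   at T, hence again the final move of branch 1 at T-1, and then backwards the
   whole walk along branch 1, one move per step.  These moves exclude
   move-L0-L_2^1 at every earlier step, so visited-L_2^1 is never achieved.
   Setting move-L0-L_i^1 false for i >= 3 propagates nothing, since every
   clause keeps two literals that are not falsified.  Chaining k such
   decisions before the one on L_2^1 gives a refutation of size 2k+3 for any
   k <= n-2, in particular of size 2 ceil(log2 n) + 1. *)

From Stdlib Require Import Arith Lia List.
Import ListNotations.

Section UnitPropagation.
Variables (V : Type) (F : cnf V) (rho : list (lit V)).

Definition two_unfalsified : Prop :=
  forall C, F C -> exists l1 l2, l1 <> l2 /\ C l1 /\ C l2 /\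
    ~ In (lneg l1) rho /\ ~ In (lneg l2) rho.

Hypothesis Hrho : two_unfalsified.

Lemma up_implied_two_unfalsified l : up_implied F rho l -> In l rho.
Proof.
  induction 1 as [l Hl | C l HC _ _ IH]; [exact Hl |].
  exfalso.
  destruct (Hrho C HC) as (l1 & l2 & Hne & H1 & H2 & Hn1 & Hn2).
  apply Hn1, IH; [exact H1 |]. intros ->.
  apply Hn2, IH; [exact H2 | congruence].
Qed.

Lemma no_up_conflict_two_unfalsified :
  (forall l, In l rho -> ~ In (lneg l) rho) -> ~ up_conflict F rho.
Proof.
  intros Hcons [(C & HC & Hall) | (l & H1 & H2)].
  - destruct (Hrho C HC) as (l1 & _ & _ & H1 & _ & Hn1 & _).
    exact (Hn1 (up_implied_two_unfalsified _ (Hall l1 H1))).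
  - exact (Hcons l (up_implied_two_unfalsified _ H1) (up_implied_two_unfalsified _ H2)).
Qed.

End UnitPropagation.
Arguments two_unfalsified {V} F rho.
Arguments up_implied_two_unfalsified {V F rho}.
Arguments no_up_conflict_two_unfalsified {V F rho}.

Section PlanningGraph.
Variable P : task.

Lemma fact_mutex_irrefl t p : ~ snd (fact_layer P t) p p.
Proof. destruct t; simpl; [tauto | intros [H _]; exact (H eq_refl)]. Qed.

Lemma act_in_noop t p : fst (fact_layer P t) p -> act_in P (fact_layer P t) (Noop p).
Proof.
  intros Hp. split; [exact I |]. split.
  - intros q ->. exact Hp.
  - intros q r -> ->. apply fact_mutex_irrefl.
Qed.

Lemma fact_layer_mono t t' p : t <= t' -> fst (fact_layer P t) p -> fst (fact_layer P t') p.
Proof.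
  induction 1 as [| t' _ IH]; [tauto |].
  intros Hp. exists (Noop p). split; [apply act_in_noop; exact (IH Hp) | reflexivity].
Qed.

End PlanningGraph.

Section Encoding.
Variables (P : task) (T : nat) (rho : list (lit (gvar P))).
Local Notation F := (graphplan_cnf P T).
Local Notation implied := (up_implied F rho).

Lemma goal_clause_unit g a0 :
  goal P g -> act_at P T a0 -> gadd P a0 g ->
  (forall a, act_at P T a -> gadd P a g -> a = a0 \/ implied (Neg (a, T))) ->
  implied (Pos (a0, T)).
Proof.
  intros Hg Ha0 Hga0 Hall.
  apply up_unit with (C := fun l => exists a, l = Pos (a, T) /\ act_at P T a /\ gadd P a g).
  - left. exists g. split; [exact Hg | intro l; tauto].
  - exists a0. auto.
  - intros l' (a & -> & Ha & Hga) Hne.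
    destruct (Hall a Ha Hga) as [-> | H]; [congruence | exact H].
Qed.

Lemma pre_clause_unit t a p a0 :
  2 <= t <= T -> act_at P t a -> gpre P a p ->
  act_at P (t - 1) a0 -> gadd P a0 p ->
  implied (Pos (a, t)) ->
  (forall a', act_at P (t - 1) a' -> gadd P a' p -> a' = a0 \/ implied (Neg (a', t - 1))) ->
  implied (Pos (a0, t - 1)).
Proof.
  intros Ht Ha Hp Ha0 Hga0 Hpos Hall.
  apply up_unit with (C := fun l => l = Neg (a, t) \/
    exists a', l = Pos (a', t - 1) /\ act_at P (t - 1) a' /\ gadd P a' p).
  - right; left. exists t, a, p. split; [exact Ht |]. split; [exact Ha |].
    split; [exact Hp | intro l; tauto].
  - right. exists a0. auto.
  - intros l' [-> | (a' & -> & Ha' & Hga')] Hne; [exact Hpos |].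
    destruct (Hall a' Ha' Hga') as [-> | H]; [congruence | exact H].
Qed.

Lemma pre_clause_conflict t a p :
  2 <= t <= T -> act_at P t a -> gpre P a p ->
  implied (Pos (a, t)) ->
  (forall a', act_at P (t - 1) a' -> gadd P a' p -> implied (Neg (a', t - 1))) ->
  up_conflict F rho.
Proof.
  intros Ht Ha Hp Hpos Hall. left.
  exists (fun l => l = Neg (a, t) \/
    exists a', l = Pos (a', t - 1) /\ act_at P (t - 1) a' /\ gadd P a' p).
  split.
  - right; left. exists t, a, p. split; [exact Ht |]. split; [exact Ha |].
    split; [exact Hp | intro l; tauto].
  - intros l [-> | (a' & -> & Ha' & Hga')]; [exact Hpos | exact (Hall a' Ha' Hga')].
Qed.

Lemma mutex_clause_unit_r t a b :
  1 <= t <= T -> mutex_at P t a b -> implied (Pos (a, t)) -> implied (Neg (b, t)).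
Proof.
  intros Ht Hm Hpos.
  apply up_unit with (C := fun l => l = Neg (a, t) \/ l = Neg (b, t)).
  - right; right. exists t, a, b. split; [exact Ht |]. split; [exact Hm | intro l; tauto].
  - right; reflexivity.
  - intros l' [-> | ->] Hne; [exact Hpos | congruence].
Qed.

Lemma mutex_clause_unit_l t a b :
  1 <= t <= T -> mutex_at P t a b -> implied (Pos (b, t)) -> implied (Neg (a, t)).
Proof.
  intros Ht Hm Hpos.
  apply up_unit with (C := fun l => l = Neg (a, t) \/ l = Neg (b, t)).
  - right; right. exists t, a, b. split; [exact Ht |]. split; [exact Hm | intro l; tauto].
  - left; reflexivity.
  - intros l' [-> | ->] Hne; [congruence | exact Hpos].
Qed.

(* A precondition clause is never falsified by decisions at the last step,
   because its achiever literals live one step earlier. *)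
Lemma graphplan_two_unfalsified :
  (forall l, In l rho -> exists a, l = Neg (a, T)) ->
  (forall g, goal P g -> exists a b, a <> b /\ act_at P T a /\ act_at P T b /\
     gadd P a g /\ gadd P b g /\ ~ In (Neg (a, T)) rho /\ ~ In (Neg (b, T)) rho) ->
  two_unfalsified F rho.
Proof.
  intros Hneg Hgoal C HC.
  assert (Hpos : forall v, ~ In (Pos v) rho).
  { intros v Hin. destruct (Hneg _ Hin) as [a' E]. discriminate E. }
  destruct HC as [(g & Hg & HC) | [(t & a & p & Ht & Ha & Hp & HC) | (t & a & b & Ht & Hm & HC)]].
  - destruct (Hgoal g Hg) as (a & b & Hab & Ha & Hb & Hga & Hgb & Hna & Hnb).
    exists (Pos (a, T)), (Pos (b, T)). repeat split.
    + intro E. injection E. exact Hab.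
    + apply HC. exists a. auto.
    + apply HC. exists b. auto.
    + exact Hna.
    + exact Hnb.
  - assert (Hlayer : fst (fact_layer P (S (t - 2))) p).
    { replace (S (t - 2)) with (t - 1) by lia. destruct Ha as (_ & Hpre & _). exact (Hpre p Hp). }
    destruct Hlayer as (a' & Ha' & Hga').
    exists (Neg (a, t)), (Pos (a', t - 1)). repeat split.
    + discriminate.
    + apply HC. left. reflexivity.
    + apply HC. right. exists a'. split; [reflexivity |]. split; [| exact Hga'].
      unfold act_at. replace (t - 1 - 1) with (t - 2) by lia. exact Ha'.
    + apply Hpos.
    + intro Hin. destruct (Hneg _ Hin) as [a'' E]. injection E. lia.
  - destruct Hm as (_ & _ & Hab & _).
    exists (Neg (a, t)), (Neg (b, t)). repeat split.
    + intro E. injection E. exact Hab.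
    + apply HC. left. reflexivity.
    + apply HC. right. reflexivity.
    + apply Hpos.
    + apply Hpos.
Qed.

End Encoding.

(* [path_node j] is L_1^j, with L_1^0 read as L0. *)
Definition path_node (j : nat) : node := match j with 0 => L0 | S _ => L1 j end.

Definition depth (x : node) : nat := match x with L0 => 0 | L1 k => k | Lb _ => 1 end.

Definition fact_node (p : map_fact) : node := match p with At x | Visited x => x end.

Lemma depth_path_node j : depth (path_node j) = j.
Proof. destruct j; reflexivity. Qed.

Lemma path_node_neq_Lb j i : path_node j <> Lb i.
Proof. destruct j; discriminate. Qed.

Lemma node_eq_dec (x y : node) : {x = y} + {x <> y}.
Proof. decide equality; apply Nat.eq_dec. Defined.

Section MapGraph.
Variable n : nat.

Lemma map_edge_depth u v : map_edge n u v -> depth v <= S (depth u).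
Proof.
  intros [[-> ->] | [[-> ->] | [(k & _ & [[-> ->] | [-> ->]]) | (i & _ & [[-> ->] | [-> ->]])]]];
    simpl; lia.
Qed.

Lemma map_edge_path j : S j <= 2 * n - 3 -> map_edge n (path_node j) (path_node (S j)).
Proof.
  intros Hj. destruct j as [| j].
  - left. split; reflexivity.
  - right; right; left. exists (S j). split; [lia |]. left. split; [reflexivity |].
    simpl. f_equal. lia.
Qed.

Lemma map_edge_into_path u j :
  map_edge n u (path_node (S j)) -> u = path_node j \/ u = L1 (S (S j)).
Proof.
  change (path_node (S j)) with (L1 (S j)).
  intros [[-> E] | [[-> E] | [(k & Hk & [[-> E] | [-> E]]) | (i & _ & [[-> E] | [-> E]])]]];
    try discriminate; injection E as E.
  - left. replace j with 0 by lia. reflexivity.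
  - left. destruct j as [| j]; [lia |]. simpl. f_equal. lia.
  - right. f_equal. lia.
Qed.

Lemma map_edge_into_Lb u i : map_edge n u (Lb i) -> u = L0.
Proof.
  intros [[-> E] | [[-> E] | [(k & _ & [[-> E] | [-> E]]) | (j & _ & [[-> E] | [-> E]])]]];
    try discriminate; reflexivity.
Qed.

Lemma map_edge_from_Lb i v : map_edge n (Lb i) v -> v = L0.
Proof.
  intros [[E ->] | [[E ->] | [(k & _ & [[E ->] | [E ->]]) | (j & _ & [[E ->] | [E ->]])]]];
    try discriminate; reflexivity.
Qed.

Lemma map_edge_L0_Lb i : 2 <= i <= n -> map_edge n L0 (Lb i).
Proof. intros Hi. right; right; right. exists i. split; [exact Hi | left; split; reflexivity]. Qed.

End MapGraph.

Section MapPlanningGraph.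
Variable n : nat.
Local Notation M := (MAP_task n).
Local Notation Lay t := (fact_layer M t).
Local Notation mv x y := (@Real M (x, y)).
Local Notation noop p := (@Noop M p).

Lemma gadd_At_inv a x : gadd M a (At x) -> (exists u, a = mv u x) \/ a = noop (At x).
Proof.
  destruct a as [[u v] | q]; simpl; intros H.
  - left. exists u. destruct H as [H | H]; [injection H as -> | discriminate]. reflexivity.
  - right. subst. reflexivity.
Qed.

Lemma gadd_Visited_inv a x : gadd M a (Visited x) -> (exists u, a = mv u x) \/ a = noop (Visited x).
Proof.
  destruct a as [[u v] | q]; simpl; intros H.
  - left. exists u. destruct H as [H | H]; [discriminate | injection H as ->]. reflexivity.
  - right. subst. reflexivity.
Qed.

Lemma gadd_At_functional a x y : gadd M a (At x) -> gadd M a (At y) -> x = y.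
Proof. destruct a as [[u v] | q]; simpl; intuition congruence. Qed.

Lemma act_in_move t x y : map_edge n x y -> fst (Lay t) (At x) -> act_in M (Lay t) (mv x y).
Proof.
  intros He Hx. split; [exact He |]. split.
  - intros p ->. exact Hx.
  - intros p q -> ->. apply fact_mutex_irrefl.
Qed.

Lemma fact_layer_depth t p : fst (Lay t) p -> depth (fact_node p) <= t.
Proof.
  revert p. induction t as [| t IH]; intros p Hp.
  - simpl in Hp. subst. simpl. lia.
  - destruct Hp as ([[u v] | q] & (He & Hpre & _) & Hadd).
    + assert (Hu := IH _ (Hpre (At u) eq_refl)). assert (Hd := map_edge_depth n u v He).
      simpl in Hu, Hadd. destruct Hadd as [-> | ->]; simpl; lia.
    + simpl in Hadd. subst q. assert (Hq := IH _ (Hpre p eq_refl)). lia.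
Qed.

Lemma path_node_reached j t : j <= 2 * n - 3 -> j <= t ->
  fst (Lay t) (At (path_node j)) /\ (1 <= j -> fst (Lay t) (Visited (path_node j))).
Proof.
  intros Hj Ht.
  enough (Hexact : fst (Lay j) (At (path_node j)) /\ (1 <= j -> fst (Lay j) (Visited (path_node j)))).
  { destruct Hexact as [HA HV].
    split; [| intros Hj1]; apply fact_layer_mono with j; auto. }
  clear Ht. induction j as [| j IH]; [split; [reflexivity | lia] |].
  destruct (IH ltac:(lia)) as [HA _].
  assert (Hmove := act_in_move j _ _ (map_edge_path n j ltac:(lia)) HA).
  split; [| intros _]; exists (mv (path_node j) (path_node (S j)));
    (split; [exact Hmove |]); [left | right]; reflexivity.
Qed.

Lemma L0_reached t : fst (Lay t) (At L0).
Proof. apply (path_node_reached 0 t); lia. Qed.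

Lemma Lb_reached i t : 2 <= i <= n -> 1 <= t ->
  fst (Lay t) (At (Lb i)) /\ fst (Lay t) (Visited (Lb i)).
Proof.
  intros Hi Ht.
  assert (Hmove := act_in_move 0 L0 (Lb i) (map_edge_L0_Lb n i Hi) (L0_reached 0)).
  assert (Hreach : forall f, gadd M (mv L0 (Lb i)) f -> fst (Lay t) f).
  { intros f Hf. apply fact_layer_mono with 1; [exact Ht |].
    exists (mv L0 (Lb i)). split; [exact Hmove | exact Hf]. }
  split; apply Hreach; [left | right]; reflexivity.
Qed.

Definition at_action (x : node) (a : gact M) : Prop :=
  a = noop (At x) \/ exists y, a = mv x y.

Lemma at_action_of_gadd_At a x : gadd M a (At x) -> exists u, at_action u a.
Proof.
  intros [[u ->] | ->]%gadd_At_inv; [exists u; right; exists x | exists x; left]; reflexivity.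
Qed.

Definition at_facts_mutex (FL : flayer M) : Prop :=
  forall x y, x <> y -> fst FL (At x) -> fst FL (At y) -> snd FL (At x) (At y).

Lemma at_actions_mutex FL a b x y :
  at_facts_mutex FL -> act_in M FL a -> act_in M FL b -> a <> b ->
  at_action x a -> at_action y b -> act_mutex M FL a b.
Proof.
  intros Hat Ha Hb Hne Hxa Hyb.
  assert (Hpa : gpre M a (At x)) by (destruct Hxa as [-> | [? ->]]; reflexivity).
  assert (Hpb : gpre M b (At y)) by (destruct Hyb as [-> | [? ->]]; reflexivity).
  split; [exact Ha |]. split; [exact Hb |]. split; [exact Hne |].
  destruct (node_eq_dec x y) as [<- | Hxy].
  - left. destruct Hxa as [-> | [y1 ->]].
    + destruct Hyb as [-> | [y2 ->]]; [congruence |].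
      right. exists (At x). split; [reflexivity | left; exact Hpa].
    + left. exists (At x). split; [reflexivity | left; exact Hpb].
  - right. exists (At x), (At y). split; [exact Hpa |]. split; [exact Hpb |].
    destruct Ha as (_ & Hpre_a & _). destruct Hb as (_ & Hpre_b & _).
    apply Hat; auto.
Qed.

Lemma at_facts_mutex_layer t : at_facts_mutex (Lay t).
Proof.
  induction t as [| t IH]; intros x y Hxy Hx Hy.
  - simpl in Hx, Hy. congruence.
  - split; [congruence |]. split; [exact Hx |]. split; [exact Hy |].
    intros a b Ha Hb Hga Hgb.
    destruct (at_action_of_gadd_At a x Hga) as [u Hu].
    destruct (at_action_of_gadd_At b y Hgb) as [v Hv].
    apply at_actions_mutex with u v; auto.
    intros <-. exact (Hxy (gadd_At_functional a x y Hga Hgb)).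
Qed.

(* Having visited [L_i^1] and then being at [x] takes [depth x + 2] steps. *)
Lemma visited_Lb_at_mutex i t x : x <> Lb i -> t < depth x + 2 ->
  fst (Lay t) (Visited (Lb i)) -> fst (Lay t) (At x) ->
  snd (Lay t) (Visited (Lb i)) (At x).
Proof.
  revert x. induction t as [| t IH]; intros x Hx Hd HV HA; [discriminate HV |].
  split; [discriminate |]. split; [exact HV |]. split; [exact HA |].
  intros a b Ha Hb Hga Hgb.
  destruct (gadd_Visited_inv a _ Hga) as [[u ->] | ->].
  - assert (u = L0) as ->.
    { destruct Ha as [He _]. exact (map_edge_into_Lb n u i He). }
    destruct (at_action_of_gadd_At b x Hgb) as [v Hv].
    apply at_actions_mutex with L0 v; auto using at_facts_mutex_layer.
    + intros <-. apply Hx. symmetry.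
      exact (gadd_At_functional (mv L0 (Lb i)) (Lb i) x (or_introl eq_refl) Hgb).
    + right. exists (Lb i). reflexivity.
  - split; [exact Ha |]. split; [exact Hb |].
    split; [destruct (gadd_At_inv b x Hgb) as [[? ->] | ->]; discriminate |].
    right. destruct Ha as (_ & Hpre_a & _). destruct Hb as (Hb_act & Hpre_b & _).
    assert (HVt := Hpre_a _ eq_refl).
    destruct (gadd_At_inv b x Hgb) as [[u ->] | ->].
    + simpl in Hb_act. exists (Visited (Lb i)), (At u). split; [reflexivity |].
      split; [reflexivity |]. assert (HAt := Hpre_b _ eq_refl).
      destruct (node_eq_dec u (Lb i)) as [-> | Hu].
      * apply map_edge_from_Lb in Hb_act as ->. simpl in Hd.
        replace t with 0 in HVt by lia. discriminate HVt.
      * assert (Hdd := map_edge_depth n u x Hb_act).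
        apply IH; [exact Hu | lia | exact HVt | exact HAt].
    + exists (Visited (Lb i)), (At x). split; [reflexivity |]. split; [reflexivity |].
      apply IH; [exact Hx | lia | exact HVt | exact (Hpre_b _ eq_refl)].
Qed.

Hypothesis Hn : 2 <= n.

Local Notation T := (2 * n - 2).
Local Notation F := (graphplan_cnf M T).
Local Notation path_move j := (mv (path_node j) (path_node (S j))).
Local Notation side_move i := (mv L0 (Lb i)).
Local Notation last_move := (path_move (2 * n - 4)).

Lemma last_node_eq : L1 (2 * n - 3) = path_node (S (2 * n - 4)).
Proof. change (path_node (S (2 * n - 4))) with (L1 (S (2 * n - 4))). f_equal. lia. Qed.

Lemma act_at_path_move t j : j <= 2 * n - 4 -> j < t -> act_at M t (path_move j).
Proof.
  intros Hj Ht. apply act_in_move; [apply map_edge_path; lia | apply path_node_reached; lia].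
Qed.

Lemma act_at_side_move t i : 2 <= i <= n -> act_at M t (side_move i).
Proof. intros Hi. apply act_in_move; [exact (map_edge_L0_Lb n i Hi) | apply L0_reached]. Qed.

Lemma act_at_noop_visited_Lb t i : 2 <= i <= n -> 2 <= t -> act_at M t (noop (Visited (Lb i))).
Proof. intros Hi Ht. apply act_in_noop. apply Lb_reached; lia. Qed.

Lemma path_node_achiever t j a f :
  f = At (path_node (S j)) \/ f = Visited (path_node (S j)) ->
  t <= S (S j) -> act_at M t a -> gadd M a f ->
  a = path_move j \/ (a = noop f /\ S j < t).
Proof.
  intros Hf Ht Ha Hga.
  assert (Hach : (exists u, a = mv u (path_node (S j))) \/ a = noop f).
  { destruct Hf as [-> | ->]; [apply gadd_At_inv | apply gadd_Visited_inv]; exact Hga. }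
  destruct Ha as (Hact & Hpre & _).
  destruct Hach as [[u ->] | ->].
  - destruct (map_edge_into_path n u j Hact) as [-> | ->]; [left; reflexivity |].
    exfalso. assert (Hd := fact_layer_depth _ _ (Hpre _ eq_refl)). simpl in Hd. lia.
  - right. split; [reflexivity |].
    assert (Hd := fact_layer_depth _ _ (Hpre _ eq_refl)).
    destruct Hf as [-> | ->]; simpl in Hd; lia.
Qed.

Lemma mutex_at_side_path_move t i j : 2 <= i <= n -> j <= 2 * n - 4 -> j < t ->
  mutex_at M t (side_move i) (path_move j).
Proof.
  intros Hi Hj Ht.
  apply at_actions_mutex with L0 (path_node j).
  - apply at_facts_mutex_layer.
  - apply act_at_side_move. exact Hi.
  - apply act_at_path_move; assumption.
  - intro E. injection E as _ E. exact (path_node_neq_Lb (S j) i (eq_sym E)).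
  - right. exists (Lb i). reflexivity.
  - right. exists (path_node (S j)). reflexivity.
Qed.

Section Propagation.
Variable rho : list (lit (gvar M)).
Local Notation implied := (up_implied F rho).

Lemma last_move_forced :
  implied (Neg (last_move, T)) -> implied (Pos (last_move, S (2 * n - 4))).
Proof.
  intros Hneg.
  set (g := Visited (path_node (S (2 * n - 4)))).
  assert (Hnoop : act_at M T (noop g)).
  { apply act_in_noop. apply path_node_reached; lia. }
  assert (Hgoal : implied (Pos (noop g, T))).
  { apply goal_clause_unit with g; [left; unfold g; rewrite <- last_node_eq; reflexivity
                                   | exact Hnoop | reflexivity |].
    intros a Ha Hga.
    destruct (path_node_achiever T (2 * n - 4) a g (or_intror eq_refl) ltac:(lia) Ha Hga)
      as [-> | [-> _]]; [right; exact Hneg | left; reflexivity]. }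
  enough (H : implied (Pos (last_move, T - 1)))
    by (replace (T - 1) with (S (2 * n - 4)) in H by lia; exact H).
  apply pre_clause_unit with (noop g) g; [lia | exact Hnoop | reflexivity
    | apply act_at_path_move; lia | right; reflexivity | exact Hgoal |].
  intros a Ha Hga.
  destruct (path_node_achiever (T - 1) (2 * n - 4) a g (or_intror eq_refl) ltac:(lia) Ha Hga)
    as [-> | [_ Hlt]]; [left; reflexivity | lia].
Qed.

Lemma path_moves_forced :
  implied (Pos (last_move, S (2 * n - 4))) ->
  forall k, k <= 2 * n - 4 -> implied (Pos (path_move k, S k)).
Proof.
  intros Hlast. apply Nat.left_induction; [intros ? ? ->; reflexivity | exact Hlast |].
  intros k Hk Hnext.
  apply (pre_clause_unit M T rho (S (S k)) (path_move (S k)) (At (path_node (S k))));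
    [lia | apply act_at_path_move; lia | reflexivity | apply act_at_path_move; lia
    | left; reflexivity | exact Hnext |].
  intros a Ha Hga.
  destruct (path_node_achiever (S k) k a _ (or_introl eq_refl) ltac:(lia) Ha Hga)
    as [-> | [_ Hlt]]; [left; reflexivity | lia].
Qed.

Lemma side_move_conflict i : 2 <= i <= n -> implied (Pos (side_move i, T)) -> up_conflict F rho.
Proof.
  intros Hi Hside.
  assert (Hneg : implied (Neg (last_move, T))).
  { apply mutex_clause_unit_r with (side_move i); [lia | | exact Hside].
    apply mutex_at_side_path_move; lia. }
  assert (Hlast := last_move_forced Hneg).
  apply pre_clause_conflict with T (side_move i) (At L0);
    [lia | apply act_at_side_move; exact Hi | reflexivity | exact Hside |].
  intros a Ha Hga. replace (T - 1) with (S (2 * n - 4)) in * by lia.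
  apply mutex_clause_unit_l with last_move; [lia | | exact Hlast].
  destruct (at_action_of_gadd_At a L0 Hga) as [u Hu].
  apply at_actions_mutex with u (path_node (2 * n - 4));
    [apply at_facts_mutex_layer | exact Ha | apply act_at_path_move; lia | | exact Hu
    | right; eexists; reflexivity].
  intros ->. discriminate (gadd_At_functional _ _ _ Hga (or_introl eq_refl)).
Qed.

Lemma visited_Lb_chain i : 2 <= i <= n ->
  (forall k, k <= 2 * n - 4 -> implied (Neg (side_move i, S k))) ->
  forall m, S (S m) <= T -> implied (Pos (noop (Visited (Lb i)), S (S m))) -> up_conflict F rho.
Proof.
  intros Hi Hneg. induction m as [| m IH]; intros Hm Hpos.
  - apply pre_clause_conflict with 2 (noop (Visited (Lb i))) (Visited (Lb i));
      [lia | apply act_at_noop_visited_Lb; lia | reflexivity | exact Hpos |].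
    intros a Ha Hga. destruct (gadd_Visited_inv a _ Hga) as [[u ->] | ->].
    + destruct Ha as [Hact _]. rewrite (map_edge_into_Lb n u i Hact). apply (Hneg 0). lia.
    + destruct Ha as (_ & Hpre & _). discriminate (Hpre _ eq_refl).
  - apply IH; [lia |].
    apply (pre_clause_unit M T rho (S (S (S m))) (noop (Visited (Lb i))) (Visited (Lb i)));
      [lia | apply act_at_noop_visited_Lb; lia | reflexivity | apply act_at_noop_visited_Lb; lia
      | reflexivity | exact Hpos |].
    intros a Ha Hga. destruct (gadd_Visited_inv a _ Hga) as [[u ->] | ->]; [| left; reflexivity].
    right. destruct Ha as [Hact _]. rewrite (map_edge_into_Lb n u i Hact). apply Hneg. lia.
Qed.

Lemma last_side_move_conflict : implied (Neg (side_move 2, T)) -> up_conflict F rho.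
Proof.
  intros Hneg2.
  set (g := Visited (Lb 2)).
  assert (Hnoop : act_at M T (noop g)) by (apply act_at_noop_visited_Lb; lia).
  assert (Hgoal : implied (Pos (noop g, T))).
  { apply goal_clause_unit with g; [right; reflexivity | exact Hnoop | reflexivity |].
    intros a Ha Hga. destruct (gadd_Visited_inv a _ Hga) as [[u ->] | ->]; [| left; reflexivity].
    right. destruct Ha as [Hact _]. rewrite (map_edge_into_Lb n u 2 Hact). exact Hneg2. }
  assert (Hneg : implied (Neg (last_move, T))).
  { apply mutex_clause_unit_r with (noop g); [lia | | exact Hgoal].
    split; [exact Hnoop |]. split; [apply act_at_path_move; lia |]. split; [discriminate |].
    right. exists g, (At (path_node (2 * n - 4))). split; [reflexivity |]. split; [reflexivity |].
    apply visited_Lb_at_mutex;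
      [apply path_node_neq_Lb | rewrite depth_path_node; lia | apply Lb_reached; lia
      | apply path_node_reached; lia]. }
  assert (Hpath := path_moves_forced (last_move_forced Hneg)).
  apply (visited_Lb_chain 2 ltac:(lia)) with (2 * n - 4).
  - intros k Hk. apply mutex_clause_unit_l with (path_move k); [lia | | exact (Hpath k Hk)].
    apply mutex_at_side_path_move; lia.
  - lia.
  - replace (S (S (2 * n - 4))) with T by lia. exact Hgoal.
Qed.

End Propagation.

Definition side_decisions (m : nat) (rho : list (lit (gvar M))) : Prop :=
  forall l, In l rho -> exists i, m < i /\ l = Neg (side_move i, T).

Lemma side_decisions_two_unfalsified m rho :
  2 <= m -> side_decisions m rho -> two_unfalsified F rho.
Proof.
  intros Hm Hrho. apply graphplan_two_unfalsified.
  - intros l Hl. destruct (Hrho l Hl) as (i & _ & ->). eexists. reflexivity.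
  - intros g [-> | ->].
    + exists (noop (Visited (L1 (2 * n - 3)))), last_move. rewrite last_node_eq.
      split; [discriminate |].
      split; [apply act_in_noop; apply path_node_reached; lia |].
      split; [apply act_at_path_move; lia |].
      split; [reflexivity |]. split; [right; reflexivity |].
      split; intros Hin; destruct (Hrho _ Hin) as (i & _ & E); [discriminate E |].
      injection E as _ E. discriminate E.
    + exists (noop (Visited (Lb 2))), (side_move 2).
      split; [discriminate |].
      split; [apply act_at_noop_visited_Lb; lia |].
      split; [apply act_at_side_move; lia |].
      split; [reflexivity |]. split; [right; reflexivity |].
      split; intros Hin; destruct (Hrho _ Hin) as (i & Hi & E); [discriminate E |].
      injection E as E. lia.
Qed.

Lemma side_decision_open m rho : m + 2 <= n -> side_decisions (m + 2) rho ->
  ~ up_conflict F rho /\ MAP_isvar n (side_move (m + 2), T) /\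
  ~ up_implied F rho (Pos (side_move (m + 2), T)) /\
  ~ up_implied F rho (Neg (side_move (m + 2), T)).
Proof.
  intros Hmn Hrho.
  assert (Hopen := side_decisions_two_unfalsified (m + 2) rho ltac:(lia) Hrho).
  assert (Hdec : forall l, up_implied F rho l -> exists i, m + 2 < i /\ l = Neg (side_move i, T))
    by (intros l Hl; exact (Hrho l (up_implied_two_unfalsified Hopen l Hl))).
  split; [| split; [| split]].
  - apply no_up_conflict_two_unfalsified; [exact Hopen |].
    intros l Hl Hl'. destruct (Hrho l Hl) as (i & _ & ->).
    destruct (Hrho _ Hl') as (j & _ & E). discriminate E.
  - split; [unfold MAP_horizon; simpl; lia | apply act_at_side_move; lia].
  - intros Hl. destruct (Hdec _ Hl) as (i & _ & E). discriminate E.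
  - intros Hl. destruct (Hdec _ Hl) as (i & Hi & E). injection E as E. lia.
Qed.

Fixpoint side_chain (m : nat) : dpll_tree (gvar M) :=
  DBranch (side_move (m + 2), T) DLeaf (match m with 0 => DLeaf | S m' => side_chain m' end).

Lemma tree_size_side_chain m : tree_size (side_chain m) = 2 * m + 3.
Proof. induction m as [| m IH]; [reflexivity | cbn [side_chain tree_size]; rewrite IH; ring]. Qed.

Lemma side_chain_refutes m rho : m + 2 <= n -> side_decisions (m + 2) rho ->
  dpll_refutes F (MAP_isvar n) rho (side_chain m).
Proof.
  revert rho. induction m as [| m IH]; intros rho Hmn Hrho;
    destruct (side_decision_open _ rho Hmn Hrho) as (Hnc & Hvar & Hpos & Hneg);
    refine (conj Hnc (conj Hvar (conj Hpos (conj Hneg (conj _ _))))).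
  all: try (eapply side_move_conflict; [| apply up_dec; left; reflexivity]; lia).
  - apply last_side_move_conflict. apply up_dec. left. reflexivity.
  - apply IH; [lia |]. intros l [<- | Hl].
    + exists (S m + 2). split; [lia | reflexivity].
    + destruct (Hrho l Hl) as (i & Hi & E). exists i. split; [lia | exact E].
Qed.

End MapPlanningGraph.

Lemma MAP_refutation_of_size n m : 2 <= n -> m + 2 <= n ->
  exists t, dpll_refutation (MAP_cnf n) (MAP_isvar n) t /\ tree_size t = 2 * m + 3.
Proof.
  intros Hn Hmn. exists (side_chain n m). split.
  - apply (side_chain_refutes n Hn m []); [exact Hmn | intros l []].
  - apply tree_size_side_chain.
Qed.

Theorem corollary2 : forall n : nat, 2 <= n ->
  exists t : dpll_tree (gvar (MAP_task n)),
    dpll_refutation (MAP_cnf n) (MAP_isvar n) t /\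
    tree_size t = 2 * Nat.log2_up n + 1.
Proof.
  intros n Hn.
  assert (Hpos : 0 < Nat.log2_up n) by (apply Nat.log2_up_pos; lia).
  assert (Hlt : Nat.log2_up n < n) by (apply Nat.log2_up_lt_lin; lia).
  destruct (MAP_refutation_of_size n (Nat.log2_up n - 1) Hn ltac:(lia)) as (t & Hrefutes & Hsize).
  exists t. split; [exact Hrefutes | lia].
Qed.
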